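(* Let $\Pi_n$ be a standard PARITY$_n$ program such that no rule $y\leftarrow B$ of $\Pi_n$ has $y\in var(B)$ and every rule body of $\Pi_n$ is consistent. Then there is an almost pure PARITY$_n$ program $\Pi_n'$ with $|\Pi_n'|\le|\Pi_n|$.
   Context: A rule element is one of $\top$, $\bot$, $x$, $not\ x$, $not\ not\ x$, where $x$ is a variable. A (canonical) rule is $H\leftarrow B$ with $H$ a variable or $\bot$ and $B$ a finite set of rule elements; a canonical program is a finite set of rules. For a body $B$, $var(B)=\{e\in B: e\text{ is a variable}\}$. For a set of variables $I$: $I\models\top$; $I\not\models\bot$; $I\models x$ iff $I\models not\ not\ x$ iff $x\in I$; $I\models not\ x$ iff $x\notin I$; $I\models B$ iff $I$ satisfies every element of $B$; $I$ is closed under $H\leftarrow B$ if $I\models B$ implies $I\models H$. The reduct $\Pi^I$ replaces $not\ not\ x$ by $\top$ if $x\in I$ else $\bot$, and $not\ x$ by $\top$ if $x\notin I$ else $\bot$; $I$ is an answer set of $\Pi$ if $I$ is the least set closed under all rules of $\Pi^I$; $Ans(\Pi)$ is the set of answer sets; $var(\Pi)$ the set of variables occurring in $\Pi$; $|\Pi|$ the number of rules. Strings $w\in\{0,1\}^n$ are identified with $\{x_i:w_i=1\}$; PARITY$_n$ is the set of strings in $\{0,1\}^n$ with an odd number of 1's; a PARITY$_n$ program is a canonical program $\Pi$ with $var(\Pi)=\{x_1,\dots,x_n\}$ and $Ans(\Pi)=$ PARITY$_n$. For a set $B$ of rule elements, $S(B)=\{I\subseteq\{x_1,\dots,x_n\}: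 I\models B\}$; $B$ is consistent if $S(B)\neq\emptyset$. $B$ covers a variable $x$ if $x\in B$, $not\ x\in B$ or $not\ not\ x\in B$; $B$ fully covers $\{x_1,\dots,x_n\}$ if it covers every $x_i$. A PARITY$_n$ program $\Pi$ is standard if for every rule $x\leftarrow B\in\Pi$ with head a variable $x$: whenever $S(B\cup\{x\})$ has exactly one element, $not\ not\ x\notin B$. For a program $\Pi$, $F^-(\Pi)$ is the set of rules $H\leftarrow B\in\Pi$ such that $B\cup\{H\}$ does not fully cover $\{x_1,\dots,x_n\}$ (when $H=\bot$, this means $B$ does not fully cover), and $F^+(\Pi)=\Pi\setminus F^-(\Pi)$. An almost pure PARITY$_n$ program is a standard PARITY$_n$ program in which no rule $y\leftarrow B$ has $y\in var(B)$, every rule body is consistent, and every rule $H\leftarrow B\in F^+(\Pi)$ satisfies $var(B)=\emptyset$. *)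

(* Canonical logic programs over the variables x_1..x_n,
   represented by the ordinals 'I_n (x_{i+1} <-> i : 'I_n). *)
From HB Require Import structures.
From mathcomp Require Import all_boot.

Set Implicit Arguments.
Unset Strict Implicit.
Unset Printing Implicit Defensive.

Section Canonical.
Variable n : nat.

Inductive elem : Type :=
  | ETop | EBot | EVar of 'I_n | ENot of 'I_n | ENotNot of 'I_n.

Definition elem_code (e : elem) : unit + unit + 'I_n + 'I_n + 'I_n :=
  match e with
  | ETop => inl (inl (inl (inl tt)))
  | EBot => inl (inl (inl (inr tt)))
  | EVar i => inl (inl (inr i))
  | ENot i => inl (inr i)
  | ENotNot i => inr i
  end.

Definition elem_decode (c : unit + unit + 'I_n + 'I_n + 'I_n) : elem :=
  match c with
  | inl (inl (inl (inl _))) => ETop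
  | inl (inl (inl (inr _))) => EBot
  | inl (inl (inr i)) => EVar i
  | inl (inr i) => ENot i
  | inr i => ENotNot i
  end.

Lemma elem_codeK : cancel elem_code elem_decode.
Proof. by case. Qed.

HB.instance Definition _ := Finite.copy elem (can_type elem_codeK).

(* A body is a finite set of rule elements; a rule is H <- B where the head
   is Some x (a variable) or None (bot); a program is a finite set of rules. *)
Definition body := {set elem}.
Definition rule := (option 'I_n * {set elem})%type.
Definition program := {set rule}.

Definition head (r : rule) : option 'I_n := r.1.
Definition rbody (r : rule) : body := r.2.

Definition interp := {set 'I_n}.

Definition sat_elem (I : interp) (e : elem) : bool :=
  match e with
  | ETop => true
  | EBot => false
  | EVar x => x \in I
  | ENot x => x \notin I
  | ENotNot x => x \in I
  end.

Definition sat_body (I : interp) (B : body) : bool :=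
  [forall e in B, sat_elem I e].

Definition sat_head (I : interp) (h : option 'I_n) : bool :=
  if h is Some x then x \in I else false.

Definition reduct_elem (I : interp) (e : elem) : elem :=
  match e with
  | ENot x => if x \notin I then ETop else EBot
  | ENotNot x => if x \in I then ETop else EBot
  | e => e
  end.

Definition reduct_rule (I : interp) (r : rule) : rule :=
  (head r, [set reduct_elem I e | e in rbody r]).

Definition reduct (P : program) (I : interp) : program :=
  [set reduct_rule I r | r in P].

Definition closed_rule (J : interp) (r : rule) : bool :=
  sat_body J (rbody r) ==> sat_head J (head r).

Definition closed_prog (J : interp) (P : program) : Prop :=
  forall r, r \in P -> closed_rule J r.

Definition answer_set (P : program) (I : interp) : Prop :=
  closed_prog I (reduct P I) /\
  forall J : interp, closed_prog J (reduct P I) -> I \subset J.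

Definition elem_vars (e : elem) : {set 'I_n} :=
  match e with
  | EVar x | ENot x | ENotNot x => [set x]
  | _ => set0
  end.

Definition rule_vars (r : rule) : {set 'I_n} :=
  (if head r is Some x then [set x] else set0) :|:
  \bigcup_(e in rbody r) elem_vars e.

Definition prog_vars (P : program) : {set 'I_n} :=
  \bigcup_(r in P) rule_vars r.

(* var(B): the variables that are themselves elements of B. *)
Definition pos_vars (B : body) : {set 'I_n} := [set x | EVar x \in B].

Definition parity_program (P : program) : Prop :=
  prog_vars P = setT /\
  forall I : interp, answer_set P I <-> odd #|I|.

Definition S (B : body) : {set interp} := [set I : interp | sat_body I B].

Definition consistent (B : body) : Prop := S B != set0.

Definition covers (B : body) (x : 'I_n) : bool :=
  [|| EVar x \in B, ENot x \in B | ENotNot x \in B].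

Definition fully_covers (B : body) : bool := [forall x, covers B x].

Definition standard (P : program) : Prop :=
  parity_program P /\
  forall x B, (Some x, B) \in P ->
    #|S (EVar x |: B)| = 1 -> ENotNot x \notin B.

(* B u {H}, where H = bot adds no variable (bot covers nothing). *)
Definition body_with_head (r : rule) : body :=
  if head r is Some x then EVar x |: rbody r else rbody r.

Definition Fminus (P : program) : {set rule} :=
  [set r in P | ~~ fully_covers (body_with_head r)].

Definition Fplus (P : program) : {set rule} := P :\: Fminus P.

Definition no_self_loop (P : program) : Prop :=
  forall y B, (Some y, B) \in P -> y \notin pos_vars B.

Definition bodies_consistent (P : program) : Prop :=
  forall r, r \in P -> consistent (rbody r).

Definition almost_pure (P : program) : Prop :=
  [/\ standard P, no_self_loop P, bodies_consistent P &
      forall r, r \in Fplus P -> pos_vars (rbody r) = set0].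

End Canonical.

From Pilot Require Import Defs.
From HB Require Import structures.
From mathcomp Require Import all_boot.

(* In each rule whose head and body fully cover the variables, replace every
   positive body atom x by not not x.  Both elements have the same models, so
   bodies keep their models and consistency, and the new body has no positive
   atom.  In the reduct w.r.t. I such a body becomes top or bot according to
   whether I satisfies the original body, so every answer set of the old
   program is one of the new.  Conversely, an answer set I of the new program
   is one of the old as soon as I satisfies no fully covering body.  If I were
   even, a fully covering rule x <- B with I |= B would make the odd answer
   set I \ {x} satisfy B too (no self loop, and standardness excludes
   not not x from B), forcing x into I \ {x}.  So I is odd. *)

Set Implicit Arguments.
Unset Strict Implicit.
Unset Printing Implicit Defensive.

Section Purification.
Variable n : nat.
Implicit Types (I J K L : interp n) (B C : body n) (e : elem n) (r : rule n)
  (P : program n).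

Lemma sat_bodyP K B : reflect (forall e, e \in B -> sat_elem K e) (sat_body K B).
Proof. exact: forall_inP. Qed.

Lemma sat_body_setU1 K e B : sat_body K (e |: B) = sat_elem K e && sat_body K B.
Proof.
apply/sat_bodyP/andP => [H|[He /sat_bodyP HB] e'].
- split; first by apply: H; rewrite setU11.
  by apply/sat_bodyP => e' He'; apply: H; rewrite setU1r.
- by case/setU1P => [->|]; last exact: HB.
Qed.

Lemma sat_body_imset K (f : elem n -> elem n) B :
  sat_body K (f @: B) = [forall e in B, sat_elem K (f e)].
Proof.
apply/sat_bodyP/forall_inP => H e He; first exact/H/imset_f.
by case/imsetP: He => e' He' ->; apply: H.
Qed.

Lemma fully_covers_sat_eq C I K :
  fully_covers C -> sat_body I C -> sat_body K C -> K = I.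
Proof.
move=> /forallP covC /sat_bodyP satI /sat_bodyP satK; apply/setP => z.
by case/or3P: (covC z) => Hz; move: (satI _ Hz) (satK _ Hz) => /=;
  [move=> -> -> | move=> /negbTE -> /negbTE -> | move=> -> ->].
Qed.

Lemma S_fully_covers C I : fully_covers C -> sat_body I C -> S C = [set I].
Proof.
move=> covC satI; apply/setP => K; rewrite !inE.
by apply/idP/eqP => [/(fully_covers_sat_eq covC satI)|->].
Qed.

Lemma covers_setU1_var x C z : covers (EVar x |: C) z = (z == x) || covers C z.
Proof.
have EVar_inj : injective (@EVar n) by move=> ? ? [].
by rewrite /covers !in_setU1 (inj_eq EVar_inj) -orbA.
Qed.

Lemma mem_bigcup_elem_vars C z : (z \in \bigcup_(e in C) elem_vars e) = covers C z.
Proof.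
apply/bigcupP/or3P => [[[||y|y|y] He] /=|]; rewrite ?inE //.
- by move=> /eqP->; constructor 1.
- by move=> /eqP->; constructor 2.
- by move=> /eqP->; constructor 3.
by case=> Hz; [exists (EVar z) | exists (ENot z) | exists (ENotNot z)]; rewrite /= ?inE.
Qed.

Definition is_var e : bool := if e is EVar _ then true else false.

Lemma sat_reduct_elem_self I e : sat_elem I (reduct_elem I e) = sat_elem I e.
Proof. by case: e => //= x; case: (x \in I). Qed.

Lemma sat_reduct_elem_nonvar K I e :
  ~~ is_var e -> sat_elem K (reduct_elem I e) = sat_elem I e.
Proof. by case: e => //= x _; case: (x \in I). Qed.

Lemma sat_reduct_elem_mono K L I e : K \subset L ->
  sat_elem K (reduct_elem I e) -> sat_elem L (reduct_elem I e).
Proof. by move=> /subsetP sKL; case: e => //= x; case: ifP. Qed.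

Lemma sat_reduct_self I B : sat_body I (reduct_elem I @: B) = sat_body I B.
Proof.
by rewrite sat_body_imset; apply: eq_forallb => e; rewrite sat_reduct_elem_self.
Qed.

Lemma sat_reduct_mono K L I B : K \subset L ->
  sat_body K (reduct_elem I @: B) -> sat_body L (reduct_elem I @: B).
Proof.
move=> sKL; rewrite !sat_body_imset => /forall_inP H; apply/forall_inP => e He.
exact: sat_reduct_elem_mono sKL (H e He).
Qed.

Lemma closed_reductP J P I : closed_prog J (reduct P I) <->
  forall r, r \in P -> closed_rule J (reduct_rule I r).
Proof.
split=> H r Hr; first exact/H/imset_f.
by case/imsetP: Hr => r' Hr' ->; apply: H.
Qed.

Lemma closed_reduct_rule_self I r :
  closed_rule I (reduct_rule I r) = sat_body I (rbody r) ==> sat_head I (Defs.head r).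
Proof. by rewrite /closed_rule /= sat_reduct_self. Qed.

Lemma sat_head_setI h J I : sat_head J h -> sat_head I h -> sat_head (J :&: I) h.
Proof. by case: h => //= x; rewrite inE => -> ->. Qed.

Definition dneg_vars B : body n :=
  [set e in B | ~~ is_var e] :|: @ENotNot n @: pos_vars B.

Lemma mem_dneg_vars B e : (e \in dneg_vars B) = match e with
  | EVar _ => false
  | ENotNot y => (ENotNot y \in B) || (EVar y \in B)
  | _ => e \in B end.
Proof.
have mem_ENotNot (A : {set 'I_n}) f :
    (f \in @ENotNot n @: A) = if f is ENotNot y then y \in A else false.
  by case: f => [||y|y|y] /=; [apply/negbTE/imsetP => -[].. | apply: mem_imset => ? ? []].
by rewrite !inE mem_ENotNot; case: e => [||y|y|y]; rewrite /= ?orbF ?andbT ?andbF ?inE.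
Qed.

Lemma dneg_vars_nonvar B e : e \in dneg_vars B -> ~~ is_var e.
Proof. by rewrite mem_dneg_vars; case: e. Qed.

Lemma pos_vars_dneg_vars B : pos_vars (dneg_vars B) = set0.
Proof. by apply/setP => z; rewrite inE mem_dneg_vars inE. Qed.

Lemma sat_dneg_vars K B : sat_body K (dneg_vars B) = sat_body K B.
Proof.
apply/sat_bodyP/sat_bodyP => H e.
- case: e => [||y|y|y] He //; first by apply: (H (EBot n)); rewrite mem_dneg_vars.
  + by apply: (H (ENotNot y)); rewrite mem_dneg_vars He orbT.
  + by apply: (H (ENot y)); rewrite mem_dneg_vars.
  + by apply: (H (ENotNot y)); rewrite mem_dneg_vars He.
- by rewrite mem_dneg_vars; case: e => [||y|y|y] //=; [apply: H | apply: H |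
    case/orP => /H].
Qed.

Lemma S_dneg_vars B : S (dneg_vars B) = S B.
Proof. by apply/setP => K; rewrite !inE sat_dneg_vars. Qed.

Lemma S_setU1_dneg_vars e B : S (e |: dneg_vars B) = S (e |: B).
Proof. by apply/setP => K; rewrite !inE !sat_body_setU1 sat_dneg_vars. Qed.

(* With no positive atom left, the reduct does not depend on the model. *)
Lemma sat_reduct_dneg_vars K I B :
  sat_body K (reduct_elem I @: dneg_vars B) = sat_body I B.
Proof.
rewrite sat_body_imset -(sat_dneg_vars I); apply/forall_inP/sat_bodyP => H e He.
- by rewrite -(sat_reduct_elem_nonvar K) ?(dneg_vars_nonvar He) ?H.
- by rewrite sat_reduct_elem_nonvar ?(dneg_vars_nonvar He) ?H.
Qed.

Lemma covers_dneg_vars B z : covers (dneg_vars B) z = covers B z.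
Proof.
rewrite /covers !mem_dneg_vars.
by case: (EVar z \in B); case: (ENot z \in B); case: (ENotNot z \in B).
Qed.

Definition purify_rule r : rule n :=
  if fully_covers (body_with_head r) then (Defs.head r, dneg_vars (rbody r)) else r.

Definition purify P : program n := purify_rule @: P.

Lemma head_purify_rule r : Defs.head (purify_rule r) = Defs.head r.
Proof. by rewrite /purify_rule; case: ifP. Qed.

Lemma fully_covers_purify_rule r :
  fully_covers (body_with_head (purify_rule r)) = fully_covers (body_with_head r).
Proof.
rewrite /purify_rule; case: ifP => // <-; case: r => [[x|] B];
  apply: eq_forallb => z; rewrite /= ?covers_setU1_var covers_dneg_vars //.
Qed.

Lemma rule_vars_purify_rule r : rule_vars (purify_rule r) = rule_vars r.
Proof.
apply/setP => z; rewrite /rule_vars head_purify_rule !in_setU !mem_bigcup_elem_vars.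
by rewrite /purify_rule; case: ifP => //= _; rewrite covers_dneg_vars.
Qed.

Lemma prog_vars_purify P : prog_vars (purify P) = prog_vars P.
Proof.
apply/setP => z; apply/bigcupP/bigcupP => [[_ /imsetP[r Hr ->]]|[r Hr]].
- by rewrite rule_vars_purify_rule; exists r.
- by exists (purify_rule r); [apply: imset_f | rewrite rule_vars_purify_rule].
Qed.

Lemma closed_reduct_purify_rule_self I r :
  closed_rule I (reduct_rule I (purify_rule r)) = closed_rule I (reduct_rule I r).
Proof.
rewrite !closed_reduct_rule_self head_purify_rule /purify_rule.
by case: ifP => //= _; rewrite sat_dneg_vars.
Qed.

Lemma closed_reduct_purify_self I P :
  closed_prog I (reduct (purify P) I) <-> closed_prog I (reduct P I).
Proof.
split=> /closed_reductP H; apply/closed_reductP => r Hr.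
- by rewrite -closed_reduct_purify_rule_self; apply/H/imset_f.
- by case/imsetP: Hr => r' Hr' ->; rewrite closed_reduct_purify_rule_self H.
Qed.

Lemma closed_setI_reduct_from_purify I J r :
  closed_rule J (reduct_rule I (purify_rule r)) ->
  closed_rule I (reduct_rule I r) -> closed_rule (J :&: I) (reduct_rule I r).
Proof.
rewrite /closed_rule /= head_purify_rule => HJ HI; apply/implyP => satJI.
have satI := sat_reduct_mono (subsetIr J I) satJI.
apply: sat_head_setI; last exact: (implyP HI).
apply: (implyP HJ); rewrite /purify_rule; case: ifP => _ /=.
  by rewrite sat_reduct_dneg_vars -sat_reduct_self.
exact: sat_reduct_mono (subsetIl J I) satJI.
Qed.

Lemma closed_setI_reduct_to_purify I J r :
  ~~ (fully_covers (body_with_head r) && sat_body I (rbody r)) ->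
  closed_rule J (reduct_rule I r) -> closed_rule I (reduct_rule I r) ->
  closed_rule (J :&: I) (reduct_rule I (purify_rule r)).
Proof.
rewrite /closed_rule /= head_purify_rule /purify_rule => Hnsat HJ HI.
apply/implyP; case: ifP Hnsat => /= Hcov Hnsat satJI.
  by rewrite sat_reduct_dneg_vars in satJI; rewrite satJI in Hnsat.
have satI := sat_reduct_mono (subsetIr J I) satJI.
have satJ := sat_reduct_mono (subsetIl J I) satJI.
by apply: sat_head_setI; [exact: (implyP HJ) | exact: (implyP HI)].
Qed.

Lemma answer_set_purify P I : answer_set P I -> answer_set (purify P) I.
Proof.
move=> [closedI minI]; split; first exact/closed_reduct_purify_self.
move=> J /closed_reductP closedJ; apply: subset_trans (subsetIl J I); apply: minI.
move/closed_reductP: closedI => closedI.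
apply/closed_reductP => r Hr; apply: closed_setI_reduct_from_purify (closedI r Hr).
exact/closedJ/imset_f.
Qed.

Lemma answer_set_purify_inv P I :
  (forall r, r \in P -> ~~ (fully_covers (body_with_head r) && sat_body I (rbody r))) ->
  answer_set (purify P) I -> answer_set P I.
Proof.
move=> Hnsat [/closed_reduct_purify_self closedI minI].
split=> // J /closed_reductP closedJ; apply: subset_trans (subsetIl J I); apply: minI.
move/closed_reductP: closedI => closedI.
apply/closed_reductP => _ /imsetP[r Hr ->].
exact: closed_setI_reduct_to_purify (Hnsat r Hr) (closedJ r Hr) (closedI r Hr).
Qed.

Section Parity.
Variable P : program n.
Hypotheses (stdP : standard P) (loopP : no_self_loop P).

Lemma even_closed_unsat_fully_covers I r :
  closed_prog I (reduct P I) -> ~~ odd #|I| -> r \in P ->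
  ~~ (fully_covers (body_with_head r) && sat_body I (rbody r)).
Proof.
have [[_ ansP] standP] := stdP.
move=> /closed_reductP closedI evenI; case: r => [[x|] B] Hr; apply/negP => /andP[covB satB].
  have := closedI _ Hr; rewrite closed_reduct_rule_self /= satB /= => xI.
  have oddIx : odd #|I :\ x| by move: evenI; rewrite (cardsD1 x I) xI add1n /= negbK.
  have [/closed_reductP closedIx _] := (ansP _).2 oddIx.
  suff satBx : sat_body (I :\ x) B.
    by have := closedIx _ Hr; rewrite closed_reduct_rule_self /= satBx setD11.
  apply/sat_bodyP => -[||z|z|z] He; move/sat_bodyP/(_ _ He): (satB) => //=.
  - move=> zI; rewrite in_setD1 zI andbT; apply: contraNneq (loopP Hr) => <-.
    by rewrite inE.
  - by rewrite in_setD1 negb_and => ->; rewrite orbT.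
  - move=> zI; rewrite in_setD1 zI andbT; apply: contraTneq He => ->.
    apply: standP Hr _; rewrite (S_fully_covers (I := I)) ?cards1 //.
    by rewrite sat_body_setU1 /= xI.
by have := closedI _ Hr; rewrite closed_reduct_rule_self /= satB.
Qed.

Lemma parity_program_purify : parity_program (purify P).
Proof.
have [[varsP ansP] _] := stdP; split; first by rewrite prog_vars_purify.
move=> I; split; last by move/ansP/answer_set_purify.
move=> ansI; apply/negPn/negP => evenI.
have closedI : closed_prog I (reduct P I).
  exact/closed_reduct_purify_self/(ansI.1).
have /ansP := answer_set_purify_inv
  (fun r => even_closed_unsat_fully_covers closedI evenI) ansI.
by rewrite (negbTE evenI).
Qed.

Lemma standard_purify : standard (purify P).
Proof.
have [_ standP] := stdP; split; first exact: parity_program_purify.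
move=> x C /imsetP[[h B] Hr]; rewrite /purify_rule /=.
case: ifP => _ [Eh ->]; subst h; last exact: standP.
rewrite S_setU1_dneg_vars mem_dneg_vars negb_or => /(standP _ _ Hr) ->.
by have := loopP Hr; rewrite inE.
Qed.

Lemma no_self_loop_purify : no_self_loop (purify P).
Proof.
move=> y C /imsetP[[h B] Hr]; rewrite /purify_rule /=.
case: ifP => _ [Eh ->]; subst h; last exact: loopP.
by rewrite pos_vars_dneg_vars inE.
Qed.

End Parity.

Lemma bodies_consistent_purify P : bodies_consistent P -> bodies_consistent (purify P).
Proof.
move=> consP _ /imsetP[r Hr ->]; rewrite /purify_rule; case: ifP => _ /=.
  by rewrite /consistent S_dneg_vars; apply: consP.
exact: consP.
Qed.

Lemma Fplus_purify_pos_vars P r : r \in Fplus (purify P) -> pos_vars (rbody r) = set0.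
Proof.
rewrite /Fplus /Fminus !inE => /andP[+ rP]; rewrite rP negbK.
case/imsetP: rP => r0 _ ->; rewrite fully_covers_purify_rule /purify_rule => ->.
exact: pos_vars_dneg_vars.
Qed.

End Purification.

Theorem mainTheorem16 (n : nat) (P : program n) :
  standard P -> no_self_loop P -> bodies_consistent P ->
  exists P' : program n, almost_pure P' /\ #|P'| <= #|P|.
Proof.
move=> stdP loopP consP; exists (purify P); split; last exact: leq_imset_card.
split.
- exact: standard_purify.
- exact: no_self_loop_purify.
- exact: bodies_consistent_purify.
- exact: Fplus_purify_pos_vars.
Qed.
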